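(* For $\zeta\in\mathbb D$ define $$z(\zeta)=h_E(\zeta)+ih_N(\zeta)-h_W(\zeta)-ih_S(\zeta),\qquad \vartheta(\zeta)=\tfrac{\sqrt2}{2}\big(h_E(\zeta)-h_N(\zeta)+h_W(\zeta)-h_S(\zeta)\big).$$ Then: (i) $z$ and $\vartheta$ are harmonic on $\mathbb D$; (ii) for all $\zeta\in\mathbb D$, $$\partial_\zeta z(\zeta)\cdot\partial_\zeta\overline{z}(\zeta)=\big(\partial_\zeta\vartheta(\zeta)\big)^2,$$ i.e. $\zeta$ is a conformal parametrization of the surface $\mathrm S_\diamondsuit=\{(z(\zeta),\vartheta(\zeta)):\zeta\in\mathbb D\}\subset\mathbb C\times\mathbb R$ with respect to the Lorentz quadratic form $|dz|^2-d\vartheta^2$ of $\mathbb R^{2+1}$; (iii) $(z(\zeta),\vartheta(\zeta))\to(1,\tfrac{\sqrt2}2)$, $(i,-\tfrac{\sqrt2}2)$, $(-1,\tfrac{\sqrt2}2)$, $(-i,-\tfrac{\sqrt2}2)$ as $\zeta$ tends to a point of the open arc $\gamma_E,\gamma_N,\gamma_W,\gamma_S$ respectively, and the set of all limit points of $(z(\zeta),\vartheta(\zeta))$ as $\zeta\to\partial\mathbb D$ is the closed (non-planar) quadrilateral $\mathrm C_\diamondsuit$ with consecutive vertices $(1,\tfrac{\sqrt2}2),(i,-\tfrac{\sqrt2}2),(-1,\tfrac{\sqrt2}2),(-i,-\tfrac{\sqrt2}2)$. Consequently, $\mathrm S_\diamondsuit$ is a minimal surface in the Minkowski space $\mathbb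 R^{2+1}$ spanning $\mathrm C_\diamondsuit$, with conformal parametrization $\zeta$.
   Context: $\mathbb D$ is the open unit disc. $\gamma_E=(e^{-i\pi/4},e^{i\pi/4})$, $\gamma_N=(e^{i\pi/4},e^{3i\pi/4})$, $\gamma_W=(e^{3i\pi/4},e^{5i\pi/4})$, $\gamma_S=(e^{5i\pi/4},e^{7i\pi/4})$ are the four counterclockwise boundary arcs, and $h_E,h_N,h_W,h_S$ denote their harmonic measures in $\mathbb D$: for $\alpha<\beta<\alpha+2\pi$, $\mathrm{hm}_{\mathbb D}(\zeta;(e^{i\alpha},e^{i\beta}))=\tfrac1\pi\big(\arg(e^{i\beta}-\zeta)-\arg(e^{i\alpha}-\zeta)\big)-\tfrac1{2\pi}(\beta-\alpha)$. $\partial_\zeta=\tfrac12(\partial_{\mathrm{Re}\zeta}-i\partial_{\mathrm{Im}\zeta})$ is the Wirtinger derivative. $\mathbb R^{2+1}\cong\mathbb C\times\mathbb R$ carries the Lorentz metric $dx^2+dy^2-d\vartheta^2$ for $(x+iy,\vartheta)$. (In the paper these $z,\vartheta$ are the limits of the symmetric t-embeddings and of the real part of the rotated origami maps of homogeneous Aztec diamonds, with $\zeta=\rho e^{i\phi}$, $r=\sqrt2\rho/(1+\rho^2)$.) *)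

From Stdlib Require Import Reals.
Open Scope R_scope.

Definition C := (R * R)%type.
Definition Cadd (z w : C) : C := (fst z + fst w, snd z + snd w).
Definition Csub (z w : C) : C := (fst z - fst w, snd z - snd w).
Definition Cmul (z w : C) : C :=
  (fst z * fst w - snd z * snd w, fst z * snd w + snd z * fst w).
Definition Cscal (r : R) (z : C) : C := (r * fst z, r * snd z).
Definition Cdiv (z w : C) : C :=
  let d := fst w * fst w + snd w * snd w in
  ((fst z * fst w + snd z * snd w) / d, (snd z * fst w - fst z * snd w) / d).
Definition Cexpi (t : R) : C := (cos t, sin t).
Definition Ci : C := (0, 1).

Definition Arg (w : C) : R :=
  let a := fst w in let b := snd w in
  if Rlt_dec 0 a then atan (b / a)
  else if Rlt_dec a 0 then
    (if Rle_dec 0 b then atan (b / a) + PI else atan (b / a) - PI)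
  else if Rlt_dec 0 b then PI / 2
  else if Rlt_dec b 0 then - (PI / 2) else 0.

Definition Arg02pi (w : C) : R :=
  let t := Arg w in if Rlt_dec t 0 then t + 2 * PI else t.

Definition in_disc (x y : R) : Prop := x * x + y * y < 1.

(* Harmonic measure of the arc (e^{i alpha}, e^{i beta}) at zeta = x + i y:
   hm = (1/PI) (arg(e^{i beta} - zeta) - arg(e^{i alpha} - zeta)) - (beta-alpha)/(2 PI),
   where the difference of arguments is the (continuous, for zeta in the disc)
   determination in (0, 2 PI), i.e. the argument of the quotient taken in [0,2PI). *)
Definition hm (alpha beta : R) (x y : R) : R :=
  / PI * Arg02pi (Cdiv (Csub (Cexpi beta) (x, y)) (Csub (Cexpi alpha) (x, y)))
  - (beta - alpha) / (2 * PI).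

Definition hE := hm (- (PI / 4)) (PI / 4).
Definition hN := hm (PI / 4) (3 * PI / 4).
Definition hW := hm (3 * PI / 4) (5 * PI / 4).
Definition hS := hm (5 * PI / 4) (7 * PI / 4).

(* z = hE + i hN - hW - i hS, split into real and imaginary parts *)
Definition zre (x y : R) : R := hE x y - hW x y.
Definition zim (x y : R) : R := hN x y - hS x y.
Definition theta (x y : R) : R :=
  sqrt 2 / 2 * (hE x y - hN x y + hW x y - hS x y).

Definition pdx (f : R -> R -> R) (x y l : R) : Prop :=
  derivable_pt_lim (fun t => f t y) x l.
Definition pdy (f : R -> R -> R) (x y l : R) : Prop :=
  derivable_pt_lim (fun t => f x t) y l.

Definition cont2_at (f : R -> R -> R) (x y : R) : Prop :=
  forall eps, 0 < eps -> exists delta, 0 < delta /\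
    forall x' y', (x' - x) * (x' - x) + (y' - y) * (y' - y) < delta * delta ->
      Rabs (f x' y' - f x y) < eps.

Definition harmonic_on_disc (f : R -> R -> R) : Prop :=
  exists fx fy fxx fxy fyx fyy : R -> R -> R,
    forall x y, in_disc x y ->
      pdx f x y (fx x y) /\ pdy f x y (fy x y) /\
      pdx fx x y (fxx x y) /\ pdy fx x y (fxy x y) /\
      pdx fy x y (fyx x y) /\ pdy fy x y (fyy x y) /\
      cont2_at fxx x y /\ cont2_at fxy x y /\
      cont2_at fyx x y /\ cont2_at fyy x y /\
      fxx x y + fyy x y = 0.

(* Wirtinger derivative d_zeta = (1/2)(d_x - i d_y) of a complex-valued function
   from the values of its partial derivatives fx, fy (complex numbers) *)
Definition wirtinger (fx fy : C) : C := Cscal (/ 2) (Csub fx (Cmul Ci fy)).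

(* ---------- points of R^{2+1} = C x R, written (Re, Im, vartheta) ---------- *)
Definition P3 := (R * R * R)%type.
Definition Fmap (x y : R) : P3 := (zre x y, zim x y, theta x y).

Definition close3 (p q : P3) (eps : R) : Prop :=
  let '(a1, b1, c1) := p in let '(a2, b2, c2) := q in
  Rabs (a1 - a2) < eps /\ Rabs (b1 - b2) < eps /\ Rabs (c1 - c2) < eps.

Definition tends_to_at (px py : R) (v : P3) : Prop :=
  forall eps, 0 < eps -> exists delta, 0 < delta /\
    forall x y, in_disc x y ->
      (x - px) * (x - px) + (y - py) * (y - py) < delta * delta ->
      close3 (Fmap x y) v eps.

Definition boundary_limit_point (w : P3) : Prop :=
  forall eps delta, 0 < eps -> 0 < delta ->
    exists x y, in_disc x y /\ 1 - delta < x * x + y * y /\ close3 (Fmap x y) w eps.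

Definition vE : P3 := (1, 0, sqrt 2 / 2).
Definition vN : P3 := (0, 1, - (sqrt 2 / 2)).
Definition vW : P3 := (-1, 0, sqrt 2 / 2).
Definition vS : P3 := (0, -1, - (sqrt 2 / 2)).

Definition on_segment (a b w : P3) : Prop :=
  exists t, 0 <= t <= 1 /\
    let '(a1, a2, a3) := a in let '(b1, b2, b3) := b in
    w = ((1 - t) * a1 + t * b1, (1 - t) * a2 + t * b2, (1 - t) * a3 + t * b3).

Definition in_quad (w : P3) : Prop :=
  on_segment vE vN w \/ on_segment vN vW w \/ on_segment vW vS w \/ on_segment vS vE w.

(* Every arc is a quarter circle, and the harmonic measure of the arc from a
   unit vector a to ia has the closed form 1/2 - atan (N/D)/PI with
   N = |ζ - (1+i)a|^2 - 1 and D = 1 - |ζ|^2.  Its gradient is the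
   difference of the gradients of arg (ia - ζ) and arg (a - ζ), so harmonicity
   and the identity dz dz̄ = (dϑ)^2 become rational-function identities.  As ζ
   tends to the circle, D -> 0 while N is negative on the arc itself and
   positive on the rest of the circle, which gives the boundary values.
   The four measures are positive and sum to 1, and near the circle one measure
   of each opposite pair is small; so every boundary limit point (X, Y, Z)
   satisfies |X| + |Y| = 1 and Z = (√2/2)(|X| - |Y|), i.e. lies on the
   quadrilateral.  Conversely, on a quarter circle of radius close to 1 running
   from the arc E to the arc N, hE falls continuously from about 1 to about 0
   while hW and hS stay small, so every point of the edge from vE to vN is a
   limit point.  The rotation ζ -> iζ permutes the arcs cyclically and acts by
   (z, ϑ) -> (iz, -ϑ), which transports both statements to the other arcs and
   edges. *)

From Pilot Require Import Defs.
From Stdlib Require Import Reals Lra Psatz FunctionalExtensionality.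
From Coquelicot Require Import Coquelicot.
(* Coquelicot's complex numbers would shadow C, Cmul, ... of Defs. *)
Import Defs.
Open Scope R_scope.

Local Notation s := (sqrt 2 / 2).

Lemma s_sq : s * s = / 2.
Proof. assert (H := sqrt_sqrt 2 ltac:(lra)). nra. Qed.

Lemma s_pos : 0 < s.
Proof. assert (0 < sqrt 2) by (apply sqrt_lt_R0; lra). lra. Qed.

Lemma s_lt_1 : s < 1.
Proof. pose proof s_sq; pose proof s_pos; nra. Qed.

Lemma cos_PI4_s : cos (PI / 4) = s.
Proof.
  rewrite cos_PI4. assert (0 < sqrt 2) by (apply sqrt_lt_R0; lra).
  assert (sqrt 2 * sqrt 2 = 2) by (apply sqrt_sqrt; lra). field_simplify_eq; nra.
Qed.

Lemma sin_PI4_s : sin (PI / 4) = s.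
Proof. rewrite sin_PI4, <- cos_PI4. exact cos_PI4_s. Qed.

Lemma cos_sq_add_sin_sq t : cos t * cos t + sin t * sin t = 1.
Proof. pose proof (sin2_cos2 t). unfold Rsqr in *. lra. Qed.

Definition sqdist (p1 p2 x y : R) : R := (p1 - x) * (p1 - x) + (p2 - y) * (p2 - y).

Lemma sqdist_pos a1 a2 x y :
  x * x + y * y < a1 * a1 + a2 * a2 -> 0 < sqdist a1 a2 x y.
Proof.
  intros H. unfold sqdist.
  destruct (Rle_lt_dec ((a1 - x) * (a1 - x) + (a2 - y) * (a2 - y)) 0); [|easy].
  pose proof (Rle_0_sqr (a1 - x)). pose proof (Rle_0_sqr (a2 - y)). unfold Rsqr in *.
  assert (E1 : (a1 - x) * (a1 - x) = 0) by lra.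
  assert (E2 : (a2 - y) * (a2 - y) = 0) by lra.
  apply Rsqr_0_uniq in E1, E2.
  replace x with a1 in H by lra. replace y with a2 in H by lra. lra.
Qed.

(** * The harmonic measure of a quarter arc *)

Definition quarter_num (a1 a2 x y : R) : R :=
  a1 * a1 + a2 * a2 + x * x + y * y - 2 * (a1 * (x + y) + a2 * (y - x)).
Definition quarter_den (a1 a2 x y : R) : R := a1 * a1 + a2 * a2 - x * x - y * y.

(* For |a| = 1, quarter_num = |ζ - (1 + i) a|^2 - 1 vanishes exactly on the
   hyperbolic geodesic joining a and ia, and quarter_den = 1 - |ζ|^2. *)
Definition quarter_hm (a1 a2 x y : R) : R :=
  / 2 - atan (quarter_num a1 a2 x y / quarter_den a1 a2 x y) / PI.

Lemma cos_atan_neq0 r : cos (atan r) <> 0.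
Proof. destruct (atan_bound r). apply Rgt_not_eq, cos_gt_0; lra. Qed.

Lemma atan_moebius_lt_1 r : r < 1 -> atan ((1 + r) / (r - 1)) = - atan r - PI / 4.
Proof.
  intros Hr. pose proof (atan_bound r). pose proof PI_RGT_0.
  assert (atan r < PI / 4) by (rewrite <- atan_1; apply atan_increasing; lra).
  assert (Ht : tan (atan r + PI / 4) = (r + 1) / (1 - r)).
  { rewrite tan_plus, tan_atan, tan_PI4.
    - f_equal; ring.
    - apply cos_atan_neq0.
    - apply Rgt_not_eq, cos_gt_0; lra.
    - apply Rgt_not_eq, cos_gt_0; lra.
    - rewrite tan_atan, tan_PI4. lra. }
  replace ((1 + r) / (r - 1)) with (- ((r + 1) / (1 - r))) by (field; lra).
  rewrite atan_opp, <- Ht, atan_tan by lra. ring.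
Qed.

Lemma atan_moebius_gt_1 r : 1 < r -> atan ((1 + r) / (r - 1)) = 3 * PI / 4 - atan r.
Proof.
  intros Hr. pose proof (atan_bound r). pose proof PI_RGT_0.
  assert (PI / 4 < atan r) by (rewrite <- atan_1; apply atan_increasing; lra).
  assert (Ht : tan (atan r - PI / 4) = (r - 1) / (1 + r)).
  { rewrite tan_minus, tan_atan, tan_PI4.
    - f_equal; ring.
    - apply cos_atan_neq0.
    - apply Rgt_not_eq, cos_gt_0; lra.
    - apply Rgt_not_eq, cos_gt_0; lra.
    - rewrite tan_atan, tan_PI4. lra. }
  replace ((1 + r) / (r - 1)) with (/ ((r - 1) / (1 + r))) by (field; lra).
  rewrite atan_inv by (apply Rdiv_lt_0_compat; lra).
  rewrite <- Ht, atan_tan by lra. field.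
Qed.

Lemma Arg02pi_above_diagonal X Y :
  X < Y -> Arg02pi (X, Y) = 3 * PI / 4 - atan ((X + Y) / (Y - X)).
Proof.
  intros H. pose proof PI_RGT_0. unfold Arg02pi, Arg; simpl.
  destruct (Rlt_dec 0 X) as [H1|H1]; [|destruct (Rlt_dec X 0) as [H2|H2]].
  - assert (Hr : 1 < Y / X) by (apply Rlt_div_r; lra).
    assert (0 < atan (Y / X)) by (rewrite <- atan_0; apply atan_increasing; lra).
    destruct (Rlt_dec (atan (Y / X)) 0); [lra|].
    replace ((X + Y) / (Y - X)) with ((1 + Y / X) / (Y / X - 1)) by (field; lra).
    rewrite atan_moebius_gt_1 by lra. ring.
  - assert (Hr : Y / X < 1).
    { apply Rmult_lt_reg_r with (r := - X); [lra|].
      replace (Y / X * - X) with (- Y) by (field; lra). lra. }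
    pose proof (atan_bound (Y / X)).
    replace ((X + Y) / (Y - X)) with ((1 + Y / X) / (Y / X - 1)) by (field; lra).
    rewrite atan_moebius_lt_1 by lra.
    destruct (Rle_dec 0 Y).
    + destruct (Rlt_dec (atan (Y / X) + PI) 0); lra.
    + destruct (Rlt_dec (atan (Y / X) - PI) 0); lra.
  - assert (X = 0) by lra. subst X.
    destruct (Rlt_dec 0 Y); [|lra]. destruct (Rlt_dec (PI / 2) 0); [lra|].
    replace ((0 + Y) / (Y - 0)) with 1 by (field; lra). rewrite atan_1. field.
Qed.

Lemma hm_quarter alpha x y :
  in_disc x y -> hm alpha (alpha + PI / 2) x y = quarter_hm (cos alpha) (sin alpha) x y.
Proof.
  intros Hd. unfold in_disc in Hd. pose proof PI_RGT_0.
  set (a1 := cos alpha). set (a2 := sin alpha).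
  assert (Ha : a1 * a1 + a2 * a2 = 1) by apply cos_sq_add_sin_sq.
  unfold hm, Cexpi, Csub, Cdiv; simpl.
  rewrite cos_plus, sin_plus, cos_PI2, sin_PI2. fold a1 a2.
  replace (alpha + PI / 2 - alpha) with (PI / 2) by ring.
  assert (Hsq := sqdist_pos a1 a2 x y ltac:(lra)). unfold sqdist in Hsq.
  rewrite Arg02pi_above_diagonal.
  - unfold quarter_hm.
    match goal with |- context [atan ?t] =>
      replace t with (quarter_num a1 a2 x y / quarter_den a1 a2 x y) end.
    + field. lra.
    + unfold quarter_num, quarter_den. field. repeat split; try lra;
      match goal with |- ?e <> 0 => replace e with (a1 * a1 + a2 * a2 - x * x - y * y) by ring end;
      lra.
  - unfold Rdiv. apply Rmult_lt_compat_r.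
    + apply Rinv_0_lt_compat. lra.
    + match goal with |- ?l < ?r => assert (r - l = a1 * a1 + a2 * a2 - x * x - y * y) by ring end.
      lra.
Qed.

(* (arg_dx, arg_dy) is the gradient of ζ ↦ arg (p - ζ); since that function is
   harmonic its yy-derivative is - arg_dxx.  Up to a constant, quarter_hm is
   (arg (ia - ζ) - arg (a - ζ)) / PI. *)
Definition arg_dx (p1 p2 x y : R) : R := (p2 - y) / sqdist p1 p2 x y.
Definition arg_dy (p1 p2 x y : R) : R := - (p1 - x) / sqdist p1 p2 x y.
Definition arg_dxx (p1 p2 x y : R) : R :=
  2 * (p1 - x) * (p2 - y) / (sqdist p1 p2 x y * sqdist p1 p2 x y).
Definition arg_dxy (p1 p2 x y : R) : R :=
  ((p2 - y) * (p2 - y) - (p1 - x) * (p1 - x)) / (sqdist p1 p2 x y * sqdist p1 p2 x y).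

Definition quarter_dx (a1 a2 x y : R) : R := (arg_dx (- a2) a1 x y - arg_dx a1 a2 x y) / PI.
Definition quarter_dy (a1 a2 x y : R) : R := (arg_dy (- a2) a1 x y - arg_dy a1 a2 x y) / PI.
Definition quarter_dxx (a1 a2 x y : R) : R :=
  (arg_dxx (- a2) a1 x y - arg_dxx a1 a2 x y) / PI.
Definition quarter_dxy (a1 a2 x y : R) : R :=
  (arg_dxy (- a2) a1 x y - arg_dxy a1 a2 x y) / PI.

Lemma quarter_sqdist_pos a1 a2 x y :
  0 < quarter_den a1 a2 x y -> 0 < sqdist a1 a2 x y /\ 0 < sqdist (- a2) a1 x y.
Proof. unfold quarter_den. intros H. split; apply sqdist_pos; lra. Qed.

Lemma is_derive_quarter_hm_dir a1 a2 x0 y0 e1 e2 l :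
  0 < quarter_den a1 a2 (x0 + l * e1) (y0 + l * e2) ->
  is_derive (fun l => quarter_hm a1 a2 (x0 + l * e1) (y0 + l * e2)) l
    (e1 * quarter_dx a1 a2 (x0 + l * e1) (y0 + l * e2)
     + e2 * quarter_dy a1 a2 (x0 + l * e1) (y0 + l * e2)).
Proof.
  intros H. destruct (quarter_sqdist_pos _ _ _ _ H) as [Da Db].
  set (x := x0 + l * e1) in *. set (y := y0 + l * e2) in *. pose proof PI_neq0.
  unfold quarter_hm, quarter_dx, quarter_dy, arg_dx, arg_dy, quarter_num, quarter_den, sqdist in *.
  auto_derive.
  - fold x y. lra.
  - fold x y. field. repeat split; try lra. intros E. nra.
Qed.

Lemma is_derive_quarter_hm_x a1 a2 x y :
  0 < quarter_den a1 a2 x y -> is_derive (fun t => quarter_hm a1 a2 t y) x (quarter_dx a1 a2 x y).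
Proof.
  intros H. assert (D := is_derive_quarter_hm_dir a1 a2 0 y 1 0 x).
  replace (0 + x * 1) with x in D by ring. replace (y + x * 0) with y in D by ring.
  replace (quarter_dx a1 a2 x y) with (1 * quarter_dx a1 a2 x y + 0 * quarter_dy a1 a2 x y) by ring.
  eapply is_derive_ext; [|exact (D H)]. intros t. simpl. f_equal; ring.
Qed.

Lemma is_derive_quarter_hm_y a1 a2 x y :
  0 < quarter_den a1 a2 x y -> is_derive (fun t => quarter_hm a1 a2 x t) y (quarter_dy a1 a2 x y).
Proof.
  intros H. assert (D := is_derive_quarter_hm_dir a1 a2 x 0 0 1 y).
  replace (0 + y * 1) with y in D by ring. replace (x + y * 0) with x in D by ring.
  replace (quarter_dy a1 a2 x y) with (0 * quarter_dx a1 a2 x y + 1 * quarter_dy a1 a2 x y) by ring.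
  eapply is_derive_ext; [|exact (D H)]. intros t. simpl. f_equal; ring.
Qed.

Ltac solve_quarter_derive :=
  match goal with H : 0 < quarter_den _ _ _ _ |- _ =>
    destruct (quarter_sqdist_pos _ _ _ _ H) as [Da Db] end;
  pose proof PI_neq0;
  unfold quarter_dx, quarter_dy, quarter_dxx, quarter_dxy,
    arg_dx, arg_dy, arg_dxx, arg_dxy, sqdist in *;
  auto_derive; [repeat split; lra | field; lra].

Lemma is_derive_quarter_dx_x a1 a2 x y :
  0 < quarter_den a1 a2 x y -> is_derive (fun t => quarter_dx a1 a2 t y) x (quarter_dxx a1 a2 x y).
Proof. intros H. solve_quarter_derive. Qed.

Lemma is_derive_quarter_dx_y a1 a2 x y :
  0 < quarter_den a1 a2 x y -> is_derive (fun t => quarter_dx a1 a2 x t) y (quarter_dxy a1 a2 x y).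
Proof. intros H. solve_quarter_derive. Qed.

Lemma is_derive_quarter_dy_x a1 a2 x y :
  0 < quarter_den a1 a2 x y -> is_derive (fun t => quarter_dy a1 a2 t y) x (quarter_dxy a1 a2 x y).
Proof. intros H. solve_quarter_derive. Qed.

Lemma is_derive_quarter_dy_y a1 a2 x y :
  0 < quarter_den a1 a2 x y ->
  is_derive (fun t => quarter_dy a1 a2 x t) y (- quarter_dxx a1 a2 x y).
Proof. intros H. solve_quarter_derive. Qed.

Definition continuous2 (f : R -> R -> R) (x y : R) : Prop :=
  continuous (fun z : R * R => f (fst z) (snd z)) (x, y).

Lemma cont2_at_continuous2 f x y : continuous2 f x y -> cont2_at f x y.
Proof.
  intros H eps Heps.
  destruct (H _ (locally_ball (f x y) (mkposreal eps Heps))) as [d Hd].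
  exists d. split; [apply cond_pos|]. intros x' y' Hxy. pose proof (cond_pos d).
  pose proof (Rle_0_sqr (x' - x)). pose proof (Rle_0_sqr (y' - y)).
  assert (Hx : Rabs (x' - x) < Rabs d) by (apply Rsqr_lt_abs_0; unfold Rsqr in *; lra).
  assert (Hy : Rabs (y' - y) < Rabs d) by (apply Rsqr_lt_abs_0; unfold Rsqr in *; lra).
  rewrite (Rabs_pos_eq d) in Hx, Hy by lra. exact (Hd (x', y') (conj Hx Hy)).
Qed.

Lemma continuous2_const c x y : continuous2 (fun _ _ => c) x y.
Proof. apply continuous_const. Qed.
Lemma continuous2_fst x y : continuous2 (fun a _ => a) x y.
Proof. apply continuous_fst. Qed.
Lemma continuous2_snd x y : continuous2 (fun _ b => b) x y.
Proof. apply continuous_snd. Qed.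
Lemma continuous2_plus f g x y :
  continuous2 f x y -> continuous2 g x y -> continuous2 (fun a b => f a b + g a b) x y.
Proof. intros Hf Hg. exact (continuous_plus _ _ _ Hf Hg). Qed.
Lemma continuous2_mult f g x y :
  continuous2 f x y -> continuous2 g x y -> continuous2 (fun a b => f a b * g a b) x y.
Proof. intros Hf Hg. exact (continuous_mult _ _ _ Hf Hg). Qed.
Lemma continuous2_opp f x y : continuous2 f x y -> continuous2 (fun a b => - f a b) x y.
Proof. intros Hf. exact (continuous_opp _ _ Hf). Qed.
Lemma continuous2_minus f g x y :
  continuous2 f x y -> continuous2 g x y -> continuous2 (fun a b => f a b - g a b) x y.
Proof. intros. apply (continuous2_plus f (fun a b => - g a b)); [|apply continuous2_opp]; easy. Qed.
Lemma continuous2_div f g x y : continuous2 f x y -> continuous2 g x y -> g x y <> 0 ->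
  continuous2 (fun a b => f a b / g a b) x y.
Proof.
  intros Hf Hg Hne. apply (continuous2_mult f (fun a b => / g a b)); [easy|].
  apply (continuous_comp (fun z : R * R => g (fst z) (snd z)) Rinv); [easy|].
  apply continuous_Rinv. exact Hne.
Qed.

Ltac continuous2_tac := repeat match goal with
  | |- continuous2 (fun a b => ?u + ?v) _ _ =>
      apply (continuous2_plus (fun a b => u) (fun a b => v))
  | |- continuous2 (fun a b => ?u - ?v) _ _ =>
      apply (continuous2_minus (fun a b => u) (fun a b => v))
  | |- continuous2 (fun a b => ?u * ?v) _ _ =>
      apply (continuous2_mult (fun a b => u) (fun a b => v))
  | |- continuous2 (fun a b => ?u / ?v) _ _ =>
      apply (continuous2_div (fun a b => u) (fun a b => v))
  | |- continuous2 (fun a b => - ?u) _ _ => apply (continuous2_opp (fun a b => u))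
  | |- continuous2 (fun a b => a) _ _ => apply continuous2_fst
  | |- continuous2 (fun a b => b) _ _ => apply continuous2_snd
  | |- continuous2 (fun a b => _) _ _ => apply continuous2_const
  end.

Lemma continuous2_quarter_dxx a1 a2 x y :
  0 < quarter_den a1 a2 x y -> continuous2 (quarter_dxx a1 a2) x y.
Proof.
  intros H. destruct (quarter_sqdist_pos _ _ _ _ H) as [Da Db]. pose proof PI_neq0.
  unfold quarter_dxx, arg_dxx, sqdist in *. continuous2_tac; nra.
Qed.

Lemma continuous2_quarter_dxy a1 a2 x y :
  0 < quarter_den a1 a2 x y -> continuous2 (quarter_dxy a1 a2) x y.
Proof.
  intros H. destruct (quarter_sqdist_pos _ _ _ _ H) as [Da Db]. pose proof PI_neq0.
  unfold quarter_dxy, arg_dxy, sqdist in *. continuous2_tac; nra.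
Qed.

Lemma quarter_den_unit a1 a2 x y :
  a1 * a1 + a2 * a2 = 1 -> quarter_den a1 a2 x y = 1 - (x * x + y * y).
Proof. unfold quarter_den. lra. Qed.

Lemma quarter_den_pos a1 a2 x y :
  a1 * a1 + a2 * a2 = 1 -> in_disc x y -> 0 < quarter_den a1 a2 x y.
Proof. unfold in_disc. intros Ha Hd. rewrite quarter_den_unit by exact Ha. lra. Qed.

Lemma at_corners (P : R -> R -> Prop) :
  (forall a1 a2, a1 * a1 + a2 * a2 = 1 -> P a1 a2) ->
  P s (- s) /\ P s s /\ P (- s) s /\ P (- s) (- s).
Proof. intros H. pose proof s_sq. repeat split; apply H; nra. Qed.

Lemma cos_sin_add_PI2 t : cos (t + PI / 2) = - sin t /\ sin (t + PI / 2) = cos t.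
Proof. rewrite cos_plus, sin_plus, cos_PI2, sin_PI2. split; ring. Qed.

Lemma hE_quarter x y : in_disc x y -> hE x y = quarter_hm s (- s) x y.
Proof.
  intros H. unfold hE. replace (PI / 4) with (- (PI / 4) + PI / 2) at 2 by field.
  rewrite hm_quarter, cos_neg, sin_neg, cos_PI4_s, sin_PI4_s by exact H. reflexivity.
Qed.

Lemma hN_quarter x y : in_disc x y -> hN x y = quarter_hm s s x y.
Proof.
  intros H. unfold hN. replace (3 * PI / 4) with (PI / 4 + PI / 2) by field.
  rewrite hm_quarter, cos_PI4_s, sin_PI4_s by exact H. reflexivity.
Qed.

Lemma hW_quarter x y : in_disc x y -> hW x y = quarter_hm (- s) s x y.
Proof.
  intros H. unfold hW. replace (5 * PI / 4) with (3 * PI / 4 + PI / 2) by field.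
  rewrite hm_quarter by exact H. replace (3 * PI / 4) with (PI / 4 + PI / 2) by field.
  destruct (cos_sin_add_PI2 (PI / 4)) as [-> ->]. rewrite cos_PI4_s, sin_PI4_s. reflexivity.
Qed.

Lemma hS_quarter x y : in_disc x y -> hS x y = quarter_hm (- s) (- s) x y.
Proof.
  intros H. unfold hS. replace (7 * PI / 4) with (5 * PI / 4 + PI / 2) by field.
  rewrite hm_quarter by exact H. replace (5 * PI / 4) with (PI / 4 + PI / 2 + PI / 2) by field.
  destruct (cos_sin_add_PI2 (PI / 4 + PI / 2)) as [-> ->].
  destruct (cos_sin_add_PI2 (PI / 4)) as [-> ->]. rewrite cos_PI4_s, sin_PI4_s.
  reflexivity.
Qed.

(* The arcs E, N, W, S start at (s, -s), (s, s), (-s, s), (-s, -s). *)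
Definition corner_comb (l0 l1 l2 l3 : R) (G : R -> R -> R -> R -> R) (x y : R) : R :=
  l0 * G s (- s) x y + l1 * G s s x y + l2 * G (- s) s x y + l3 * G (- s) (- s) x y.

Definition hm_comb (l0 l1 l2 l3 x y : R) : R :=
  l0 * hE x y + l1 * hN x y + l2 * hW x y + l3 * hS x y.

Lemma hm_comb_quarter l0 l1 l2 l3 x y :
  in_disc x y -> hm_comb l0 l1 l2 l3 x y = corner_comb l0 l1 l2 l3 quarter_hm x y.
Proof.
  intros H. unfold hm_comb, corner_comb.
  rewrite hE_quarter, hN_quarter, hW_quarter, hS_quarter by exact H. reflexivity.
Qed.

Lemma is_derive_corner_comb l0 l1 l2 l3 (g : R -> R -> R -> R) (dg : R -> R -> R) t :
  (forall a1 a2, a1 * a1 + a2 * a2 = 1 -> is_derive (g a1 a2) t (dg a1 a2)) ->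
  is_derive (fun u => l0 * g s (- s) u + l1 * g s s u + l2 * g (- s) s u + l3 * g (- s) (- s) u) t
    (l0 * dg s (- s) + l1 * dg s s + l2 * dg (- s) s + l3 * dg (- s) (- s)).
Proof.
  intros H. destruct (at_corners _ H) as (D0 & D1 & D2 & D3).
  apply is_derive_Reals in D0, D1, D2, D3. apply is_derive_Reals.
  repeat apply derivable_pt_lim_plus; apply derivable_pt_lim_scal; assumption.
Qed.

Lemma is_derive_corner_comb_x l0 l1 l2 l3 G GX x y :
  (forall a1 a2, a1 * a1 + a2 * a2 = 1 -> is_derive (fun t => G a1 a2 t y) x (GX a1 a2 x y)) ->
  is_derive (fun t => corner_comb l0 l1 l2 l3 G t y) x (corner_comb l0 l1 l2 l3 GX x y).
Proof.
  exact (is_derive_corner_comb _ _ _ _ (fun a1 a2 t => G a1 a2 t y) (fun a1 a2 => GX a1 a2 x y) x).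
Qed.

Lemma is_derive_corner_comb_y l0 l1 l2 l3 G GY x y :
  (forall a1 a2, a1 * a1 + a2 * a2 = 1 -> is_derive (fun t => G a1 a2 x t) y (GY a1 a2 x y)) ->
  is_derive (fun t => corner_comb l0 l1 l2 l3 G x t) y (corner_comb l0 l1 l2 l3 GY x y).
Proof.
  exact (is_derive_corner_comb _ _ _ _ (fun a1 a2 t => G a1 a2 x t) (fun a1 a2 => GY a1 a2 x y) y).
Qed.

Lemma continuous2_corner_comb l0 l1 l2 l3 G x y :
  (forall a1 a2, a1 * a1 + a2 * a2 = 1 -> continuous2 (G a1 a2) x y) ->
  continuous2 (corner_comb l0 l1 l2 l3 G) x y.
Proof.
  intros H. destruct (at_corners _ H) as (C0 & C1 & C2 & C3).
  unfold corner_comb. continuous2_tac; assumption.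
Qed.

Lemma in_disc_open x y : in_disc x y -> exists d, 0 < d /\
  forall x' y', Rabs (x' - x) < d -> Rabs (y' - y) < d -> in_disc x' y'.
Proof.
  unfold in_disc. intros H. exists ((1 - (x * x + y * y)) / 8). split; [lra|].
  intros x' y' Hx Hy. apply Rabs_def2 in Hx, Hy.
  assert (x * x < 1 /\ y * y < 1) as [] by (split; nra).
  assert (-1 < x < 1 /\ -1 < y < 1) as [[] []] by (split; split; nra).
  nra.
Qed.

Lemma is_derive_hm_comb_x l0 l1 l2 l3 x y : in_disc x y ->
  is_derive (fun t => hm_comb l0 l1 l2 l3 t y) x (corner_comb l0 l1 l2 l3 quarter_dx x y).
Proof.
  intros H. destruct (in_disc_open x y H) as [d [Hd Hopen]].
  apply (is_derive_ext_loc (fun t => corner_comb l0 l1 l2 l3 quarter_hm t y)).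
  - exists (mkposreal d Hd). intros t Ht. symmetry. apply hm_comb_quarter, Hopen.
    + exact Ht.
    + rewrite Rminus_eq_0, Rabs_R0. exact Hd.
  - apply is_derive_corner_comb_x.
    intros a1 a2 Ha. apply is_derive_quarter_hm_x, quarter_den_pos; assumption.
Qed.

Lemma is_derive_hm_comb_y l0 l1 l2 l3 x y : in_disc x y ->
  is_derive (fun t => hm_comb l0 l1 l2 l3 x t) y (corner_comb l0 l1 l2 l3 quarter_dy x y).
Proof.
  intros H. destruct (in_disc_open x y H) as [d [Hd Hopen]].
  apply (is_derive_ext_loc (fun t => corner_comb l0 l1 l2 l3 quarter_hm x t)).
  - exists (mkposreal d Hd). intros t Ht. symmetry. apply hm_comb_quarter, Hopen.
    + rewrite Rminus_eq_0, Rabs_R0. exact Hd.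
    + exact Ht.
  - apply is_derive_corner_comb_y.
    intros a1 a2 Ha. apply is_derive_quarter_hm_y, quarter_den_pos; assumption.
Qed.

Lemma harmonic_on_disc_hm_comb l0 l1 l2 l3 : harmonic_on_disc (hm_comb l0 l1 l2 l3).
Proof.
  exists (corner_comb l0 l1 l2 l3 quarter_dx), (corner_comb l0 l1 l2 l3 quarter_dy),
    (corner_comb l0 l1 l2 l3 quarter_dxx), (corner_comb l0 l1 l2 l3 quarter_dxy),
    (corner_comb l0 l1 l2 l3 quarter_dxy),
    (corner_comb l0 l1 l2 l3 (fun a1 a2 x y => - quarter_dxx a1 a2 x y)).
  intros x y H. unfold pdx, pdy.
  repeat split; try apply is_derive_Reals.
  - apply is_derive_hm_comb_x, H.
  - apply is_derive_hm_comb_y, H.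
  - apply is_derive_corner_comb_x.
    intros a1 a2 Ha. apply is_derive_quarter_dx_x, quarter_den_pos; assumption.
  - apply is_derive_corner_comb_y.
    intros a1 a2 Ha. apply is_derive_quarter_dx_y, quarter_den_pos; assumption.
  - apply is_derive_corner_comb_x.
    intros a1 a2 Ha. apply is_derive_quarter_dy_x, quarter_den_pos; assumption.
  - apply (is_derive_corner_comb_y _ _ _ _ _ (fun a1 a2 x y => - quarter_dxx a1 a2 x y)).
    intros a1 a2 Ha. apply is_derive_quarter_dy_y, quarter_den_pos; assumption.
  - apply cont2_at_continuous2, continuous2_corner_comb.
    intros a1 a2 Ha. apply continuous2_quarter_dxx, quarter_den_pos; assumption.
  - apply cont2_at_continuous2, continuous2_corner_comb.
    intros a1 a2 Ha. apply continuous2_quarter_dxy, quarter_den_pos; assumption.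
  - apply cont2_at_continuous2, continuous2_corner_comb.
    intros a1 a2 Ha. apply continuous2_quarter_dxy, quarter_den_pos; assumption.
  - apply cont2_at_continuous2, continuous2_corner_comb.
    intros a1 a2 Ha. apply continuous2_opp, continuous2_quarter_dxx, quarter_den_pos; assumption.
  - unfold corner_comb. ring.
Qed.

Lemma quarter_hm_origin a1 a2 : a1 * a1 + a2 * a2 = 1 -> quarter_hm a1 a2 0 0 = / 4.
Proof.
  intros Ha. unfold quarter_hm, quarter_num, quarter_den.
  match goal with |- context [atan ?t] => replace t with 1 end.
  2: { replace (a1 * a1 + a2 * a2 - 0 * 0 - 0 * 0) with 1 by lra. field_simplify. lra. }
  rewrite atan_1. field. apply PI_neq0.
Qed.

(* Consecutive arcs share an endpoint, so the arg-gradients telescope. *)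
Lemma quarter_gradients_telescope e1 e2 x y :
  corner_comb 1 1 1 1 (fun a1 a2 u v => e1 * quarter_dx a1 a2 u v + e2 * quarter_dy a1 a2 u v) x y
  = 0.
Proof. unfold corner_comb, quarter_dx, quarter_dy. rewrite !Ropp_involutive. unfold Rdiv. ring. Qed.

Lemma hm_sum x y : in_disc x y -> hE x y + hN x y + hW x y + hS x y = 1.
Proof.
  intros H.
  set (G := fun l => corner_comb 1 1 1 1 quarter_hm (0 + l * x) (0 + l * y)).
  assert (HD : forall c, 0 <= c <= 1 -> derivable_pt_lim G c 0).
  { intros c Hc. apply is_derive_Reals.
    assert (Hin : in_disc (0 + c * x) (0 + c * y)).
    { unfold in_disc in *. pose proof (Rle_0_sqr x). pose proof (Rle_0_sqr y).
      unfold Rsqr in *. assert (c * c <= 1) by nra. nra. }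
    rewrite <- (quarter_gradients_telescope x y (0 + c * x) (0 + c * y)).
    apply (is_derive_corner_comb _ _ _ _ (fun a1 a2 l => quarter_hm a1 a2 (0 + l * x) (0 + l * y))
      (fun a1 a2 => x * quarter_dx a1 a2 (0 + c * x) (0 + c * y)
                    + y * quarter_dy a1 a2 (0 + c * x) (0 + c * y))).
    intros a1 a2 Ha. apply is_derive_quarter_hm_dir, quarter_den_pos; assumption. }
  destruct (MVT_cor2 G (fun _ => 0) 0 1 ltac:(lra) HD) as [c [Hc _]].
  unfold G, corner_comb in Hc. rewrite !Rmult_0_l, !Rmult_1_l, !Rplus_0_l in Hc.
  destruct (at_corners _ quarter_hm_origin) as (O0 & O1 & O2 & O3).
  rewrite O0, O1, O2, O3 in Hc.
  rewrite hE_quarter, hN_quarter, hW_quarter, hS_quarter by exact H. lra.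
Qed.

Lemma quarter_hm_bounds a1 a2 x y : 0 < quarter_hm a1 a2 x y < 1.
Proof.
  unfold quarter_hm. set (r := quarter_num a1 a2 x y / quarter_den a1 a2 x y).
  pose proof (atan_bound r). pose proof PI_RGT_0.
  assert (- / 2 < atan r / PI < / 2) as [].
  { split; apply Rmult_lt_reg_r with PI; try lra; unfold Rdiv;
      rewrite Rmult_assoc, Rinv_l by lra; lra. }
  lra.
Qed.

Lemma hm_pos x y : in_disc x y -> 0 < hE x y /\ 0 < hN x y /\ 0 < hW x y /\ 0 < hS x y.
Proof.
  intros H. rewrite hE_quarter, hN_quarter, hW_quarter, hS_quarter by exact H.
  repeat split; apply quarter_hm_bounds.
Qed.

(** * Symmetry under ζ ↦ iζ *)

Lemma quarter_hm_rot a1 a2 x y : quarter_hm (- a2) a1 (- y) x = quarter_hm a1 a2 x y.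
Proof.
  unfold quarter_hm.
  replace (quarter_num (- a2) a1 (- y) x) with (quarter_num a1 a2 x y)
    by (unfold quarter_num; ring).
  replace (quarter_den (- a2) a1 (- y) x) with (quarter_den a1 a2 x y)
    by (unfold quarter_den; ring).
  reflexivity.
Qed.

Lemma in_disc_rot x y : in_disc x y -> in_disc (- y) x.
Proof. unfold in_disc. lra. Qed.

Lemma hm_rot x y : in_disc x y ->
  hE (- y) x = hS x y /\ hN (- y) x = hE x y /\ hW (- y) x = hN x y /\ hS (- y) x = hW x y.
Proof.
  intros H. pose proof (in_disc_rot x y H).
  rewrite !hE_quarter, !hN_quarter, !hW_quarter, !hS_quarter by assumption.
  rewrite <- (quarter_hm_rot (- s) (- s) x y), <- (quarter_hm_rot s (- s) x y),
    <- (quarter_hm_rot s s x y), <- (quarter_hm_rot (- s) s x y), !Ropp_involutive.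
  repeat split.
Qed.

Definition rot3 (p : P3) : P3 := let '(X, Y, Z) := p in (- Y, X, - Z).

Lemma Fmap_rot x y : in_disc x y -> Fmap (- y) x = rot3 (Fmap x y).
Proof.
  intros H. destruct (hm_rot x y H) as (RE & RN & RW & RS).
  unfold Fmap, rot3, zre, zim, theta. rewrite RE, RN, RW, RS. f_equal; [f_equal|]; ring.
Qed.

Lemma close3_rot p q eps : close3 p q eps -> close3 (rot3 p) (rot3 q) eps.
Proof.
  destruct p as [[a1 b1] c1], q as [[a2 b2] c2]. unfold close3, rot3.
  intros (Ha & Hb & Hc). replace (- b1 - - b2) with (- (b1 - b2)) by ring.
  replace (- c1 - - c2) with (- (c1 - c2)) by ring. rewrite !Rabs_Ropp. tauto.
Qed.

Lemma wirtinger_real_scale k A B :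
  Cmul (wirtinger (k * A, 0) (k * B, 0)) (wirtinger (k * A, 0) (k * B, 0))
  = Cscal (k * k) (Cmul (wirtinger (A, 0) (B, 0)) (wirtinger (A, 0) (B, 0))).
Proof. unfold Cmul, wirtinger, Cscal, Csub, Ci. simpl. f_equal; ring. Qed.

Lemma wirtinger_z_zbar x y : in_disc x y ->
  let ux := corner_comb 1 0 (-1) 0 quarter_dx x y in
  let uy := corner_comb 1 0 (-1) 0 quarter_dy x y in
  let vx := corner_comb 0 1 0 (-1) quarter_dx x y in
  let vy := corner_comb 0 1 0 (-1) quarter_dy x y in
  let tx := corner_comb 1 (-1) 1 (-1) quarter_dx x y in
  let ty := corner_comb 1 (-1) 1 (-1) quarter_dy x y in
  Cmul (wirtinger (ux, vx) (uy, vy)) (wirtinger (ux, - vx) (uy, - vy))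
  = Cscal (/ 2) (Cmul (wirtinger (tx, 0) (ty, 0)) (wirtinger (tx, 0) (ty, 0))).
Proof.
  intros H ux uy vx vy tx ty.
  destruct (at_corners (fun a1 a2 => 0 < sqdist (- a2) a1 x y)) as (D0 & D1 & D2 & D3).
  { intros a1 a2 Ha. apply quarter_sqdist_pos, quarter_den_pos; assumption. }
  rewrite Ropp_involutive in D0, D3. pose proof PI_neq0.
  unfold ux, uy, vx, vy, tx, ty, corner_comb, quarter_dx, quarter_dy, arg_dx, arg_dy.
  unfold sqdist in *. unfold Cmul, wirtinger, Cscal, Csub, Ci. simpl. rewrite !Ropp_involutive.
  f_equal; field; lra.
Qed.

(** * Boundary values on the arcs *)

Lemma quarter_num_corners x y :
  quarter_num s (- s) x y = 1 + (x * x + y * y) - 4 * s * x /\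
  quarter_num s s x y = 1 + (x * x + y * y) - 4 * s * y /\
  quarter_num (- s) s x y = 1 + (x * x + y * y) + 4 * s * x /\
  quarter_num (- s) (- s) x y = 1 + (x * x + y * y) + 4 * s * y.
Proof. unfold quarter_num. pose proof s_sq. repeat split; nra. Qed.

Lemma atan_ratio_near_PI2 eps : 0 < eps ->
  exists M, 0 < M /\ forall T, M <= T -> / 2 - atan T / PI < eps.
Proof.
  intros He. pose proof PI_RGT_0.
  set (e := Rmin (eps / 2) (/ 4)).
  assert (0 < e) by (apply Rmin_glb_lt; lra).
  assert (e <= eps / 2) by apply Rmin_l. assert (e <= / 4) by apply Rmin_r.
  exists (tan (PI / 2 - PI * e)). split; [apply tan_gt_0; nra|].
  intros T HT. assert (Ha : PI / 2 - PI * e <= atan T).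
  { rewrite <- (atan_tan (PI / 2 - PI * e)) by nra.
    destruct HT as [HT|<-]; [left; apply atan_increasing, HT | right; reflexivity]. }
  assert (/ 2 - e <= atan T / PI).
  { apply Rmult_le_reg_r with PI; [lra|]. unfold Rdiv.
    rewrite Rmult_assoc, Rinv_l by lra. nra. }
  lra.
Qed.

Lemma ratio_ge_of_den_small M c n d : 0 < M -> 0 < c -> 0 < d < c / M -> c <= n -> M <= n / d.
Proof.
  intros HM Hc [Hd Hdc] Hn. apply Rmult_le_reg_r with d; [lra|].
  unfold Rdiv. rewrite Rmult_assoc, Rinv_l, Rmult_1_r by lra.
  apply Rmult_lt_compat_l with (r := M) in Hdc; [|lra].
  replace (M * (c / M)) with c in Hdc by (field; lra). lra.
Qed.

Lemma quarter_hm_small_near_boundary eps c : 0 < eps -> 0 < c -> exists d0, 0 < d0 /\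
  forall a1 a2 x y, a1 * a1 + a2 * a2 = 1 -> in_disc x y -> 1 - (x * x + y * y) < d0 ->
    c <= quarter_num a1 a2 x y -> quarter_hm a1 a2 x y < eps.
Proof.
  intros He Hc. destruct (atan_ratio_near_PI2 eps He) as [M [HM HT]].
  exists (c / M). split; [apply Rdiv_lt_0_compat; assumption|].
  intros a1 a2 x y Ha Hd Hr Hn. unfold in_disc in Hd. apply HT.
  rewrite quarter_den_unit by exact Ha. apply ratio_ge_of_den_small with c; lra.
Qed.

Lemma quarter_hm_large_near_boundary eps c : 0 < eps -> 0 < c -> exists d0, 0 < d0 /\
  forall a1 a2 x y, a1 * a1 + a2 * a2 = 1 -> in_disc x y -> 1 - (x * x + y * y) < d0 ->
    quarter_num a1 a2 x y <= - c -> 1 - eps < quarter_hm a1 a2 x y.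
Proof.
  intros He Hc. destruct (atan_ratio_near_PI2 eps He) as [M [HM HT]].
  exists (c / M). split; [apply Rdiv_lt_0_compat; assumption|].
  intros a1 a2 x y Ha Hd Hr Hn. unfold in_disc in Hd.
  assert (H := HT (- (quarter_num a1 a2 x y / quarter_den a1 a2 x y))).
  rewrite atan_opp in H. unfold quarter_hm.
  enough (M <= - (quarter_num a1 a2 x y / quarter_den a1 a2 x y)) by (unfold Rdiv in *; lra).
  rewrite quarter_den_unit by exact Ha.
  replace (- (quarter_num a1 a2 x y / (1 - (x * x + y * y))))
    with (- quarter_num a1 a2 x y / (1 - (x * x + y * y))) by (field; lra).
  apply ratio_ge_of_den_small with c; lra.
Qed.

Lemma near_unit_circle (f : R -> R -> R) x0 y0 d0 c :
  (forall x y, continuous2 f x y) -> x0 * x0 + y0 * y0 = 1 -> 0 < d0 -> 0 < c ->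
  exists delta, 0 < delta /\ forall x y,
    (x - x0) * (x - x0) + (y - y0) * (y - y0) < delta * delta ->
    1 - (x * x + y * y) < d0 /\ Rabs (f x y - f x0 y0) < c.
Proof.
  intros Hf H0 Hd Hc.
  destruct (cont2_at_continuous2 _ _ _ (Hf x0 y0) c Hc) as [d1 [Hd1 P1]].
  assert (Hr : continuous2 (fun u v => u * u + v * v) x0 y0) by continuous2_tac.
  destruct (cont2_at_continuous2 _ _ _ Hr d0 Hd) as [d2 [Hd2 P2]].
  exists (Rmin d1 d2). split; [apply Rmin_glb_lt; assumption|].
  assert (0 < Rmin d1 d2) by (apply Rmin_glb_lt; assumption).
  assert (Rmin d1 d2 <= d1) by apply Rmin_l. assert (Rmin d1 d2 <= d2) by apply Rmin_r.
  intros x y Hxy. split.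
  - assert (Rabs (x * x + y * y - (x0 * x0 + y0 * y0)) < d0) as Habs by (apply P2; nra).
    rewrite H0 in Habs. apply Rabs_def2 in Habs. lra.
  - apply P1. nra.
Qed.

Definition disc_limit (h : R -> R -> R) (l x0 y0 : R) : Prop :=
  forall eps, 0 < eps -> exists delta, 0 < delta /\ forall x y, in_disc x y ->
    (x - x0) * (x - x0) + (y - y0) * (y - y0) < delta * delta -> Rabs (h x y - l) < eps.

Lemma disc_limit_ext (g h : R -> R -> R) l x0 y0 :
  (forall x y, in_disc x y -> h x y = g x y) -> disc_limit g l x0 y0 -> disc_limit h l x0 y0.
Proof.
  intros E Hg eps He. destruct (Hg eps He) as [d [Hd P]]. exists d. split; [exact Hd|].
  intros x y Hx Hxy. rewrite E by exact Hx. exact (P x y Hx Hxy).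
Qed.

Lemma continuous2_quarter_num a1 a2 x y : continuous2 (quarter_num a1 a2) x y.
Proof. unfold quarter_num. continuous2_tac. Qed.

Lemma disc_limit_quarter_hm_0 a1 a2 x0 y0 :
  a1 * a1 + a2 * a2 = 1 -> x0 * x0 + y0 * y0 = 1 -> 0 < quarter_num a1 a2 x0 y0 ->
  disc_limit (quarter_hm a1 a2) 0 x0 y0.
Proof.
  intros Ha H0 Hn eps He. set (c := quarter_num a1 a2 x0 y0 / 2).
  destruct (quarter_hm_small_near_boundary eps c He ltac:(unfold c; lra)) as [d0 [Hd0 P]].
  destruct (near_unit_circle (quarter_num a1 a2) x0 y0 d0 c (continuous2_quarter_num a1 a2)
    H0 Hd0 ltac:(unfold c; lra)) as [d [Hd Q]].
  exists d. split; [exact Hd|]. intros x y Hx Hxy. destruct (Q x y Hxy) as [Q1 Q2].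
  apply Rabs_def2 in Q2. pose proof (quarter_hm_bounds a1 a2 x y).
  rewrite Rminus_0_r, Rabs_pos_eq by lra. apply P; unfold c in *; auto; lra.
Qed.

Lemma disc_limit_quarter_hm_1 a1 a2 x0 y0 :
  a1 * a1 + a2 * a2 = 1 -> x0 * x0 + y0 * y0 = 1 -> quarter_num a1 a2 x0 y0 < 0 ->
  disc_limit (quarter_hm a1 a2) 1 x0 y0.
Proof.
  intros Ha H0 Hn eps He. set (c := - quarter_num a1 a2 x0 y0 / 2).
  destruct (quarter_hm_large_near_boundary eps c He ltac:(unfold c; lra)) as [d0 [Hd0 P]].
  destruct (near_unit_circle (quarter_num a1 a2) x0 y0 d0 c (continuous2_quarter_num a1 a2)
    H0 Hd0 ltac:(unfold c; lra)) as [d [Hd Q]].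
  exists d. split; [exact Hd|]. intros x y Hx Hxy. destruct (Q x y Hxy) as [Q1 Q2].
  apply Rabs_def2 in Q2. pose proof (quarter_hm_bounds a1 a2 x y).
  rewrite Rabs_minus_sym, Rabs_pos_eq by lra.
  enough (1 - eps < quarter_hm a1 a2 x y) by lra. apply P; unfold c in *; auto; lra.
Qed.

Lemma Rabs_s_mul_lt a eps : Rabs a < eps -> Rabs (s * a) < eps.
Proof.
  intros H. pose proof s_pos. pose proof s_lt_1. pose proof (Rabs_pos a).
  rewrite Rabs_mult, (Rabs_pos_eq s) by lra. nra.
Qed.

Lemma tends_to_at_of_disc_limits x0 y0 e0 e1 e2 e3 :
  disc_limit hE e0 x0 y0 -> disc_limit hN e1 x0 y0 ->
  disc_limit hW e2 x0 y0 -> disc_limit hS e3 x0 y0 ->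
  tends_to_at x0 y0 (e0 - e2, e1 - e3, s * (e0 - e1 + e2 - e3)).
Proof.
  intros L0 L1 L2 L3 eps He.
  destruct (L0 (eps / 4) ltac:(lra)) as [d0 [H0 P0]].
  destruct (L1 (eps / 4) ltac:(lra)) as [d1 [H1 P1]].
  destruct (L2 (eps / 4) ltac:(lra)) as [d2 [H2 P2]].
  destruct (L3 (eps / 4) ltac:(lra)) as [d3 [H3 P3]].
  set (m := Rmin (Rmin d0 d1) (Rmin d2 d3)).
  assert (0 < m) by (repeat apply Rmin_glb_lt; assumption).
  assert (m <= Rmin d0 d1 /\ m <= Rmin d2 d3) as [] by (split; [apply Rmin_l | apply Rmin_r]).
  pose proof (Rmin_l d0 d1). pose proof (Rmin_r d0 d1).
  pose proof (Rmin_l d2 d3). pose proof (Rmin_r d2 d3).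
  exists m. split; [assumption|]. intros x y Hx Hxy.
  specialize (P0 x y Hx ltac:(nra)). specialize (P1 x y Hx ltac:(nra)).
  specialize (P2 x y Hx ltac:(nra)). specialize (P3 x y Hx ltac:(nra)).
  apply Rabs_def2 in P0, P1, P2, P3.
  unfold close3, Fmap, zre, zim, theta.
  repeat split; try (apply Rabs_def1; lra).
  replace (s * (hE x y - hN x y + hW x y - hS x y) - s * (e0 - e1 + e2 - e3))
    with (s * ((hE x y - hN x y + hW x y - hS x y) - (e0 - e1 + e2 - e3))) by ring.
  apply Rabs_s_mul_lt, Rabs_def1; lra.
Qed.

Lemma tends_to_at_E x0 y0 : x0 * x0 + y0 * y0 = 1 -> s < x0 -> tends_to_at x0 y0 vE.
Proof.
  intros H0 Hx. destruct (quarter_num_corners x0 y0) as (NE & NN & NW & NS).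
  pose proof s_sq. pose proof s_pos.
  assert (y0 * y0 < s * s) by nra. assert (- s < y0 < s) as [] by (split; nra).
  replace vE with (1 - 0, 0 - 0, s * (1 - 0 + 0 - 0)) by (unfold vE; f_equal; [f_equal|]; ring).
  apply tends_to_at_of_disc_limits.
  - apply (disc_limit_ext (quarter_hm s (- s))); [exact hE_quarter|].
    apply disc_limit_quarter_hm_1; [nra | exact H0 | rewrite NE; nra].
  - apply (disc_limit_ext (quarter_hm s s)); [exact hN_quarter|].
    apply disc_limit_quarter_hm_0; [nra | exact H0 | rewrite NN; nra].
  - apply (disc_limit_ext (quarter_hm (- s) s)); [exact hW_quarter|].
    apply disc_limit_quarter_hm_0; [nra | exact H0 | rewrite NW; nra].
  - apply (disc_limit_ext (quarter_hm (- s) (- s))); [exact hS_quarter|].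
    apply disc_limit_quarter_hm_0; [nra | exact H0 | rewrite NS; nra].
Qed.

Lemma tends_to_at_rot x0 y0 v : tends_to_at x0 y0 v -> tends_to_at (- y0) x0 (rot3 v).
Proof.
  intros T eps He. destruct (T eps He) as [d [Hd P]]. exists d. split; [exact Hd|].
  intros x y Hx Hxy. assert (Hx' : in_disc y (- x)) by (unfold in_disc in *; lra).
  replace x with (- - x) by ring. rewrite Fmap_rot by exact Hx'.
  apply close3_rot, P; [exact Hx'|lra].
Qed.

Lemma tends_to_at_arc_rot a b v :
  (forall psi, a < psi < b -> tends_to_at (cos psi) (sin psi) v) ->
  forall phi, a + PI / 2 < phi < b + PI / 2 -> tends_to_at (cos phi) (sin phi) (rot3 v).
Proof.
  intros T phi Hphi. replace phi with (phi - PI / 2 + PI / 2) by ring.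
  destruct (cos_sin_add_PI2 (phi - PI / 2)) as [-> ->].
  apply tends_to_at_rot, T. lra.
Qed.

Lemma cos_gt_s phi : - (PI / 4) < phi < PI / 4 -> s < cos phi.
Proof.
  intros Hphi. pose proof PI_RGT_0. rewrite <- cos_PI4_s.
  destruct (Rle_lt_dec 0 phi).
  - apply cos_decreasing_1; lra.
  - rewrite <- (cos_neg phi). apply cos_decreasing_1; lra.
Qed.

Lemma rot3_vertices : rot3 vE = vN /\ rot3 vN = vW /\ rot3 vW = vS /\ rot3 vS = vE.
Proof. unfold rot3, vE, vN, vW, vS. repeat split; f_equal; try f_equal; ring. Qed.

Lemma tends_to_at_arcE phi : - (PI / 4) < phi < PI / 4 -> tends_to_at (cos phi) (sin phi) vE.
Proof. intros Hphi. apply tends_to_at_E; [apply cos_sq_add_sin_sq | apply cos_gt_s, Hphi]. Qed.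

Lemma tends_to_at_arcN phi : PI / 4 < phi < 3 * PI / 4 -> tends_to_at (cos phi) (sin phi) vN.
Proof.
  intros Hphi. destruct rot3_vertices as [<- _].
  apply (tends_to_at_arc_rot _ _ _ tends_to_at_arcE). lra.
Qed.

Lemma tends_to_at_arcW phi : 3 * PI / 4 < phi < 5 * PI / 4 -> tends_to_at (cos phi) (sin phi) vW.
Proof.
  intros Hphi. destruct rot3_vertices as (_ & <- & _).
  apply (tends_to_at_arc_rot _ _ _ tends_to_at_arcN). lra.
Qed.

Lemma tends_to_at_arcS phi : 5 * PI / 4 < phi < 7 * PI / 4 -> tends_to_at (cos phi) (sin phi) vS.
Proof.
  intros Hphi. destruct rot3_vertices as (_ & _ & <- & _).
  apply (tends_to_at_arc_rot _ _ _ tends_to_at_arcW). lra.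
Qed.

(** * Boundary limit points *)

Lemma near_boundary_opposite_small eps : 0 < eps -> exists d0, 0 < d0 /\
  forall x y, in_disc x y -> 1 - (x * x + y * y) < d0 ->
    (hE x y < eps \/ hW x y < eps) /\ (hN x y < eps \/ hS x y < eps).
Proof.
  intros He. destruct (quarter_hm_small_near_boundary eps 1 He ltac:(lra)) as [d0 [Hd0 P]].
  exists d0. split; [exact Hd0|]. intros x y Hx Hr.
  destruct (quarter_num_corners x y) as (NE & NN & NW & NS).
  pose proof s_pos. pose proof s_sq. pose proof (Rle_0_sqr x). pose proof (Rle_0_sqr y).
  unfold Rsqr in *.
  rewrite hE_quarter, hN_quarter, hW_quarter, hS_quarter by exact Hx. split.
  - destruct (Rle_lt_dec 0 x).
    + right. apply P; [nra | exact Hx | exact Hr | rewrite NW; nra].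
    + left. apply P; [nra | exact Hx | exact Hr | rewrite NE; nra].
  - destruct (Rle_lt_dec 0 y).
    + right. apply P; [nra | exact Hx | exact Hr | rewrite NS; nra].
    + left. apply P; [nra | exact Hx | exact Hr | rewrite NN; nra].
Qed.

Lemma Rabs_cases a : (Rabs a = a /\ 0 <= a) \/ (Rabs a = - a /\ a < 0).
Proof. unfold Rabs. destruct (Rcase_abs a); [right | left]; split; lra. Qed.

Lemma boundary_limit_point_eqs X Y Z : boundary_limit_point (X, Y, Z) ->
  Rabs X + Rabs Y = 1 /\ Z = s * (Rabs X - Rabs Y).
Proof.
  intros B.
  assert (K : forall eta, 0 < eta -> Rabs (Rabs X + Rabs Y - 1) < eta /\
                Rabs (Z - s * (Rabs X - Rabs Y)) < eta).
  { intros eta He. set (e := eta / 8).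
    destruct (near_boundary_opposite_small e ltac:(unfold e; lra)) as [d0 [Hd0 U]].
    destruct (B e d0 ltac:(unfold e; lra) Hd0) as [x [y [Hx [Hr Hc]]]].
    destruct (U x y Hx ltac:(lra)) as [U1 U2].
    destruct (hm_pos x y Hx) as (P0 & P1 & P2 & P3). pose proof (hm_sum x y Hx).
    unfold close3, Fmap, zre, zim, theta in Hc. destruct Hc as (C1 & C2 & C3).
    apply Rabs_def2 in C1, C2, C3.
    set (D := hE x y - hN x y + hW x y - hS x y) in *.
    assert (Rabs (Rabs X + Rabs Y - 1) < eta /\ Rabs (Rabs X - Rabs Y - D) < 6 * e) as [L1 L2].
    { unfold D, e in *.
      destruct (Rabs_cases X) as [[-> ?]|[-> ?]], (Rabs_cases Y) as [[-> ?]|[-> ?]];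
        destruct U1, U2; split; apply Rabs_def1; lra. }
    split; [exact L1|].
    replace (Z - s * (Rabs X - Rabs Y)) with ((Z - s * D) - s * (Rabs X - Rabs Y - D)) by ring.
    apply Rabs_def2 in L2. pose proof (Rabs_s_mul_lt (Rabs X - Rabs Y - D) (6 * e)) as S6.
    assert (Rabs (Z - s * D) < e) by (apply Rabs_def1; lra).
    eapply Rle_lt_trans; [apply Rabs_triang|]. rewrite Rabs_Ropp.
    assert (Rabs (s * (Rabs X - Rabs Y - D)) < 6 * e) by (apply S6, Rabs_def1; lra).
    unfold e in *. lra. }
  split; apply cond_eq; intros eta He; apply (K eta He).
Qed.

Lemma in_quad_of_eqs X Y Z :
  Rabs X + Rabs Y = 1 -> Z = s * (Rabs X - Rabs Y) -> in_quad (X, Y, Z).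
Proof.
  intros H1 ->. unfold in_quad, on_segment, vE, vN, vW, vS.
  destruct (Rabs_cases X) as [[AX SX]|[AX SX]], (Rabs_cases Y) as [[AY SY]|[AY SY]];
    rewrite AX, AY in *.
  - left. exists Y. split; [lra|]. f_equal; [f_equal|]; nra.
  - right; right; right. exists X. split; [lra|]. f_equal; [f_equal|]; nra.
  - right; left. exists (- X). split; [lra|]. f_equal; [f_equal|]; nra.
  - right; right; left. exists (- Y). split; [lra|]. f_equal; [f_equal|]; nra.
Qed.

Lemma boundary_limit_point_rot w : boundary_limit_point w -> boundary_limit_point (rot3 w).
Proof.
  intros B eps delta He Hd. destruct (B eps delta He Hd) as [x [y [Hx [Hr Hc]]]].
  exists (- y), x. split; [apply in_disc_rot, Hx|]. split; [lra|].
  rewrite Fmap_rot by exact Hx. apply close3_rot, Hc.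
Qed.

Lemma approx_value_decreasing (g : R -> R) a b v eps :
  continuity g -> 0 < eps -> a <= b -> v - eps < g a -> g b < v + eps ->
  exists t, a <= t <= b /\ Rabs (g t - v) < eps.
Proof.
  intros Hg He Hab Ha Hb.
  destruct (Rle_lt_dec (g a) v); [exists a; split; [lra | apply Rabs_def1; lra]|].
  destruct (Rle_lt_dec v (g b)); [exists b; split; [lra | apply Rabs_def1; lra]|].
  destruct (IVT_cor (fun t => g t - v) a b) as [t [Ht Et]]; [|exact Hab|cbv beta; nra|].
  - intros t. apply continuity_pt_minus; [apply Hg|].
    apply continuity_pt_const. intros ? ?. reflexivity.
  - exists t. split; [exact Ht|]. cbv beta in Et. rewrite Et, Rabs_R0. lra.
Qed.

Lemma edge_EN_approx t eps delta : 0 <= t <= 1 -> 0 < eps -> 0 < delta ->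
  exists x y, in_disc x y /\ 1 - delta < x * x + y * y /\
    Rabs (hE x y - (1 - t)) < eps /\ hW x y < eps /\ hS x y < eps.
Proof.
  intros Ht He Hd.
  destruct (quarter_hm_small_near_boundary eps 1 He ltac:(lra)) as [ds [Hds Ps]].
  destruct (quarter_hm_large_near_boundary eps (/ 2) He ltac:(lra)) as [dl [Hdl Pl]].
  set (D := Rmin (Rmin delta ds) (Rmin dl (19 / 100))).
  assert (0 < D) by (repeat apply Rmin_glb_lt; lra).
  assert (D <= Rmin delta ds) by apply Rmin_l. assert (D <= Rmin dl (19 / 100)) by apply Rmin_r.
  pose proof (Rmin_l delta ds). pose proof (Rmin_r delta ds).
  pose proof (Rmin_l dl (19 / 100)). pose proof (Rmin_r dl (19 / 100)).
  set (r := sqrt (1 - D / 2)).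
  assert (Hr2 : r * r = 1 - D / 2) by (apply sqrt_sqrt; lra).
  assert (Hr0 : 0 < r) by (apply sqrt_lt_R0; lra).
  pose proof s_pos. pose proof s_sq. assert (7 / 10 < s) by nra.
  assert (Hpt : forall th, in_disc (r * cos th) (r * sin th) /\
      r * cos th * (r * cos th) + r * sin th * (r * sin th) = 1 - D / 2).
  { intros th. pose proof (cos_sq_add_sin_sq th). unfold in_disc. split; nra. }
  set (g := fun th => quarter_hm s (- s) (r * cos th) (r * sin th)).
  assert (Hg : continuity g).
  { intros th. apply continuity_pt_filterlim, (ex_derive_continuous g).
    unfold g, quarter_hm, quarter_num, quarter_den. auto_derive.
    pose proof (cos_sq_add_sin_sq th). nra. }
  destruct (quarter_num_corners (r * cos 0) (r * sin 0)) as [N0 _].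
  destruct (quarter_num_corners (r * cos (PI / 2)) (r * sin (PI / 2))) as [N1 _].
  rewrite cos_0, sin_0 in N0. rewrite cos_PI2, sin_PI2 in N1.
  destruct (approx_value_decreasing g 0 (PI / 2) (1 - t) eps Hg He) as [th [Hth Hv]].
  - pose proof PI_RGT_0. lra.
  - enough (1 - eps < g 0) by lra. destruct (Hpt 0) as [Hin Hr].
    unfold g. rewrite cos_0, sin_0 in *. apply Pl; [nra | exact Hin | lra | rewrite N0; nra].
  - enough (g (PI / 2) < eps) by lra. destruct (Hpt (PI / 2)) as [Hin Hr].
    unfold g. rewrite cos_PI2, sin_PI2 in *. apply Ps; [nra | exact Hin | lra | rewrite N1; nra].
  - destruct (Hpt th) as [Hin Hr].
    assert (0 <= cos th) by (apply cos_ge_0; lra). assert (0 <= sin th) by (apply sin_ge_0; lra).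
    assert (0 <= r * cos th) by nra. assert (0 <= r * sin th) by nra.
    destruct (quarter_num_corners (r * cos th) (r * sin th)) as (_ & _ & NW & NS).
    exists (r * cos th), (r * sin th). split; [exact Hin|]. split; [lra|].
    rewrite hE_quarter, hW_quarter, hS_quarter by exact Hin. split; [exact Hv|].
    split; apply Ps; first [exact Hin | nra].
Qed.

Lemma boundary_limit_point_edge_EN t : 0 <= t <= 1 ->
  boundary_limit_point (1 - t, t, s * (1 - 2 * t)).
Proof.
  intros Ht eps delta He Hd. set (e := eps / 8).
  destruct (edge_EN_approx t e delta Ht ltac:(unfold e; lra) Hd)
    as [x [y (Hin & Hr & HE & HW & HS)]].
  destruct (hm_pos x y Hin) as (P0 & P1 & P2 & P3). pose proof (hm_sum x y Hin).
  apply Rabs_def2 in HE.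
  exists x, y. split; [exact Hin|]. split; [exact Hr|].
  unfold close3, Fmap, zre, zim, theta, e in *.
  split; [apply Rabs_def1; lra|]. split; [apply Rabs_def1; lra|].
  replace (s * (hE x y - hN x y + hW x y - hS x y) - s * (1 - 2 * t))
    with (s * (hE x y - hN x y + hW x y - hS x y - (1 - 2 * t))) by ring.
  apply Rabs_s_mul_lt, Rabs_def1; lra.
Qed.

Lemma in_quad_boundary_limit_point w : in_quad w -> boundary_limit_point w.
Proof.
  intros Q. pose proof boundary_limit_point_rot as Rot.
  destruct Q as [Q|[Q|[Q|Q]]]; destruct Q as [t [Ht Hw]];
    unfold vE, vN, vW, vS in Hw; simpl in Hw; subst w;
    pose proof (boundary_limit_point_edge_EN t Ht) as B;
    [idtac | apply Rot in B | apply Rot, Rot in B | apply Rot, Rot, Rot in B];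
    match goal with
    | B : boundary_limit_point ?w' |- boundary_limit_point ?w =>
        replace w with w' by (unfold rot3; f_equal; [f_equal|]; ring); exact B
    end.
Qed.

Lemma boundary_limit_point_in_quad w : boundary_limit_point w -> in_quad w.
Proof.
  destruct w as [[X Y] Z]. intros B. destruct (boundary_limit_point_eqs X Y Z B).
  apply in_quad_of_eqs; assumption.
Qed.

Lemma hm_comb_eq_pdx l0 l1 l2 l3 x y lx : in_disc x y ->
  pdx (hm_comb l0 l1 l2 l3) x y lx -> lx = corner_comb l0 l1 l2 l3 quarter_dx x y.
Proof.
  intros H P. apply (uniqueness_limite _ _ _ _ P), is_derive_Reals, is_derive_hm_comb_x, H.
Qed.

Lemma hm_comb_eq_pdy l0 l1 l2 l3 x y ly : in_disc x y ->
  pdy (hm_comb l0 l1 l2 l3) x y ly -> ly = corner_comb l0 l1 l2 l3 quarter_dy x y.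
Proof.
  intros H P. apply (uniqueness_limite _ _ _ _ P), is_derive_Reals, is_derive_hm_comb_y, H.
Qed.

Lemma zre_hm_comb : zre = hm_comb 1 0 (-1) 0.
Proof. do 2 (apply functional_extensionality; intro). unfold zre, hm_comb. ring. Qed.
Lemma zim_hm_comb : zim = hm_comb 0 1 0 (-1).
Proof. do 2 (apply functional_extensionality; intro). unfold zim, hm_comb. ring. Qed.
Lemma theta_hm_comb : theta = hm_comb s (- s) s (- s).
Proof. do 2 (apply functional_extensionality; intro). unfold theta, hm_comb. ring. Qed.

Lemma conformal_identity x y : in_disc x y ->
  forall ux uy vx vy tx ty : R,
    pdx zre x y ux -> pdy zre x y uy -> pdx zim x y vx -> pdy zim x y vy ->
    pdx theta x y tx -> pdy theta x y ty ->
    Cmul (wirtinger (ux, vx) (uy, vy)) (wirtinger (ux, - vx) (uy, - vy))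
    = Cmul (wirtinger (tx, 0) (ty, 0)) (wirtinger (tx, 0) (ty, 0)).
Proof.
  intros H ux uy vx vy tx ty Hux Huy Hvx Hvy Htx Hty.
  rewrite zre_hm_comb in Hux, Huy. rewrite zim_hm_comb in Hvx, Hvy.
  rewrite theta_hm_comb in Htx, Hty.
  apply hm_comb_eq_pdx in Hux, Hvx, Htx; try exact H.
  apply hm_comb_eq_pdy in Huy, Hvy, Hty; try exact H.
  subst. rewrite (wirtinger_z_zbar x y H).
  replace (corner_comb s (- s) s (- s) quarter_dx x y)
    with (s * corner_comb 1 (-1) 1 (-1) quarter_dx x y) by (unfold corner_comb; ring).
  replace (corner_comb s (- s) s (- s) quarter_dy x y)
    with (s * corner_comb 1 (-1) 1 (-1) quarter_dy x y) by (unfold corner_comb; ring).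
  rewrite wirtinger_real_scale, s_sq. reflexivity.
Qed.

Theorem mainTheorem8 :
  (harmonic_on_disc zre /\ harmonic_on_disc zim /\ harmonic_on_disc theta) /\
  (forall x y, in_disc x y ->
     forall ux uy vx vy tx ty : R,
       pdx zre x y ux -> pdy zre x y uy ->
       pdx zim x y vx -> pdy zim x y vy ->
       pdx theta x y tx -> pdy theta x y ty ->
       Cmul (wirtinger (ux, vx) (uy, vy)) (wirtinger (ux, - vx) (uy, - vy))
       = Cmul (wirtinger (tx, 0) (ty, 0)) (wirtinger (tx, 0) (ty, 0))) /\
  (forall phi, - (PI / 4) < phi < PI / 4 -> tends_to_at (cos phi) (sin phi) vE) /\
  (forall phi, PI / 4 < phi < 3 * PI / 4 -> tends_to_at (cos phi) (sin phi) vN) /\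
  (forall phi, 3 * PI / 4 < phi < 5 * PI / 4 -> tends_to_at (cos phi) (sin phi) vW) /\
  (forall phi, 5 * PI / 4 < phi < 7 * PI / 4 -> tends_to_at (cos phi) (sin phi) vS) /\
  (forall w : P3, boundary_limit_point w <-> in_quad w).
Proof.
  split; [|split; [exact conformal_identity|]].
  - rewrite zre_hm_comb, zim_hm_comb, theta_hm_comb.
    split; [|split]; apply harmonic_on_disc_hm_comb.
  - split; [exact tends_to_at_arcE|]. split; [exact tends_to_at_arcN|].
    split; [exact tends_to_at_arcW|]. split; [exact tends_to_at_arcS|].
    intros w. split; [apply boundary_limit_point_in_quad | apply in_quad_boundary_limit_point].
Qed.
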